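(* Let $A$ be the random matrix defined in the context, and consider parameters $r\le k$ and $D$ with $r\to\infty$, $D/r^2\to\infty$ and $(\log k)/D\to0$. Then with probability $1-o(1)$ over $A$ there exist $x,x^-\in\mathcal{S}_k$, each with at most $r$ nonzero entries, all nonzero entries at least $1/r$, and $\mathrm{supp}(x)\neq\mathrm{supp}(x^-)$, such that for every $m=o(r^2)$ the total variation distance between the distribution of $m$ i.i.d. samples from $\mathrm{cat}(Ax)$ and that of $m$ i.i.d. samples from $\mathrm{cat}(Ax^-)$ is $o(1)$. In particular no algorithm given a document of $o(r^2)$ words can distinguish $\mathrm{cat}(Ax)$ from $\mathrm{cat}(Ax^-)$ with success probability better than $1/2+o(1)$.
   Context: Random instance: let $S_1,\dots,S_k\subseteq[D]$ be independent uniformly random subsets of $[D]$ (each element included independently with probability $1/2$), and let $A\in\mathbb{R}^{D\times k}$ have $A_{ij}=1/|S_j|$ if $i\in S_j$ and $A_{ij}=0$ otherwise. $\mathcal{S}_k=\{z\in\mathbb{R}^k_{\ge0}:\sum_iz_i=1\}$. $\mathrm{cat}(p)$ denotes the categorical distribution on $[D]$ with probability vector $p$. *)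

From Stdlib Require Import Reals.
From mathcomp Require Import all_boot.
Set Implicit Arguments. Unset Strict Implicit. Unset Printing Implicit Defensive.
Local Open Scope R_scope.

Definition Omega (D k : nat) := {ffun 'I_k -> {set 'I_D}}.

(* Probability of an event under the uniform measure (each element in each
   S_j independently with prob. 1/2 <=> uniform on Omega). *)
Definition prob (D k : nat) (E : {set Omega D k}) : R :=
  INR #|E| / INR #|[set: Omega D k]|.

Definition Amat (D k : nat) (S : Omega D k) (i : 'I_D) (j : 'I_k) : R :=
  if i \in S j then / INR #|S j| else 0.

Definition Amul (D k : nat) (S : Omega D k) (x : 'I_k -> R) (i : 'I_D) : R :=
  \big[Rplus/0]_(j : 'I_k) (Amat S i j * x j).

Definition in_simplex (k : nat) (x : 'I_k -> R) : Prop :=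
  (forall j, 0 <= x j) /\ \big[Rplus/0]_(j : 'I_k) x j = 1.

Definition supp (k : nat) (x : 'I_k -> R) : {set 'I_k} :=
  [set j | if Req_EM_T (x j) 0 then false else true].

Definition r_sparse (k r : nat) (x : 'I_k -> R) : Prop :=
  (#|supp x| <= r)%N /\ (forall j, x j <> 0 -> / INR r <= x j).

(* Total variation distance between the laws of m i.i.d. samples from
   cat(p) and from cat(q), on [D]^m. *)
Definition tv_iid (D m : nat) (p q : 'I_D -> R) : R :=
  / 2 * \big[Rplus/0]_(s : {ffun 'I_m -> 'I_D})
          Rabs (\big[Rmult/1]_(t : 'I_m) p (s t) - \big[Rmult/1]_(t : 'I_m) q (s t)).

(* Let x be uniform on the first r topics and x^- uniform on the first r topics but one,
   j0, and put p = A x, q = A x^- and chi = sum_i q_i^2 / p_i.  Summing the pointwise AM-GM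
   bound 2 lam |P - Q| <= (P - Q)^2 / P + lam^2 P over [D]^m and factorising the product
   sums gives 2 TV(p^m, q^m) <= (chi^m - 1) / (2 lam) + lam / 2 for every lam > 0.
   If the first r columns of A all have at least D/3 words, their entries are at most 3/D,
   and averaging chi over the r choices of j0 yields one with chi <= 1 + 3/(r-1)^2, so
   chi^m -> 1 when m = o(r^2).  By Chebyshev a uniform random subset of [D] has fewer than
   D/3 elements with probability at most 9/D, and a union bound over the first r columns
   leaves probability at least 1 - 9r/D -> 1. *)

From HB Require Import structures.
From Stdlib Require Import Reals Lra.
From mathcomp Require Import all_boot.
Set Implicit Arguments. Unset Strict Implicit. Unset Printing Implicit Defensive.
Local Open Scope R_scope.

HB.instance Definition _ := Monoid.isComLaw.Build R 0 Rplus
  (fun a b c => esym (Rplus_assoc a b c)) Rplus_comm Rplus_0_l.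
HB.instance Definition _ := Monoid.isComLaw.Build R 1 Rmult
  (fun a b c => esym (Rmult_assoc a b c)) Rmult_comm Rmult_1_l.
HB.instance Definition _ := Monoid.isMulLaw.Build R 0 Rmult Rmult_0_l Rmult_0_r.
HB.instance Definition _ := Monoid.isAddLaw.Build R Rmult Rplus
  Rmult_plus_distr_r Rmult_plus_distr_l.

(** * Real numbers and finite sums *)

Lemma Rinv_ge0 (x : R) : 0 <= x -> 0 <= / x.
Proof.
by case=> [x_gt0|<-]; [apply/Rlt_le/Rinv_0_lt_compat | rewrite Rinv_0; lra].
Qed.

Lemma INR_ge2 (n : nat) : (1 < n)%N -> 2 <= INR n.
Proof. by move/leP/le_INR. Qed.

Lemma Rdiv_eq_cross (a b c d : R) : 0 < c -> 0 < d -> a * d = b * c -> a / c = b / d.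
Proof. by move=> c_gt0 d_gt0 e; field_simplify_eq; lra. Qed.

Lemma Rdiv_le_cross (a b c d : R) : 0 < c -> 0 < d -> a * d <= b * c -> a / c <= b / d.
Proof.
move=> c_gt0 d_gt0 le; apply: (Rmult_le_reg_r (c * d)); first nra.
have -> : a / c * (c * d) = a * d by field; lra.
by have -> : b / d * (c * d) = b * c by field; lra.
Qed.

Lemma ln_1plus_le (a : R) : 0 <= a -> ln (1 + a) <= a.
Proof.
move=> a_ge0; rewrite -{2}(ln_exp a).
case: (Rle_lt_or_eq_dec _ _ (exp_ineq1_le a)) => [lt | ->]; last lra.
by apply/Rlt_le/ln_increasing; lra.
Qed.

Lemma pow_1plus_lt (a c : R) (m : nat) :
  0 <= a -> 0 < c -> INR m * a < ln (1 + c) -> (1 + a) ^ m < 1 + c.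
Proof.
move=> a_ge0 c_gt0 small; apply: ln_lt_inv; [apply: pow_lt; lra | lra |].
rewrite ln_pow; last lra.
apply: Rle_lt_trans small; apply: Rmult_le_compat_l; first exact: pos_INR.
exact: ln_1plus_le.
Qed.

Lemma sumR_le (I : finType) (P : pred I) (F G : I -> R) :
  (forall i, P i -> F i <= G i) ->
  \big[Rplus/0]_(i | P i) F i <= \big[Rplus/0]_(i | P i) G i.
Proof. by move=> h; apply: (big_ind2 (fun x y => x <= y)) => //; [lra | move=> *; lra]. Qed.

Lemma sumR_lt (I : finType) (P : pred I) (F G : I -> R) (i0 : I) : P i0 ->
  (forall i, P i -> F i < G i) ->
  \big[Rplus/0]_(i | P i) F i < \big[Rplus/0]_(i | P i) G i.
Proof.
move=> Pi0 FG; rewrite (bigD1 i0) // [X in _ < X](bigD1 i0) //=.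
apply: Rplus_lt_le_compat; first exact: FG.
by apply: sumR_le => i /andP[Pi _]; apply/Rlt_le/FG.
Qed.

Lemma sumR_ge0 (I : finType) (P : pred I) (F : I -> R) :
  (forall i, 0 <= F i) -> 0 <= \big[Rplus/0]_(i | P i) F i.
Proof. by move=> h; apply: (big_ind (fun x => 0 <= x)) => //; [lra | move=> *; lra]. Qed.

Lemma prodR_ge0 (I : finType) (F : I -> R) :
  (forall i, 0 <= F i) -> 0 <= \big[Rmult/1]_(i : I) F i.
Proof. by move=> h; apply: (big_ind (fun x => 0 <= x)) => //; [lra | move=> *; nra]. Qed.

Lemma prodR_eq0 (I : finType) (F : I -> R) :
  \big[Rmult/1]_(i : I) F i = 0 -> exists i, F i = 0.
Proof.
case: (pickP (fun i => Req_EM_T (F i) 0)) => [i | F_neq0 prod_eq0].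
  by case: Req_EM_T => // Fi0 _ _; exists i.
suff : \big[Rmult/1]_(i : I) F i <> 0 by [].
apply: (big_ind (fun x => x <> 0)) => [| x y |i _]; first exact: R1_neq_R0.
  exact: Rmult_integral_contrapositive_currified.
by have := F_neq0 i; case: Req_EM_T.
Qed.

Lemma prodR_inv (I : finType) (F : I -> R) :
  / (\big[Rmult/1]_(i : I) F i) = \big[Rmult/1]_(i : I) / F i.
Proof. exact: (big_morph Rinv Rinv_mult Rinv_1). Qed.

Lemma sumR_const (I : finType) (P : pred I) (c : R) :
  \big[Rplus/0]_(i | P i) c = INR #|P| * c.
Proof. by rewrite big_const; elim: #|P| => [|n IH]; rewrite ?iterS ?S_INR /=; lra. Qed.

Lemma sumR_constT (I : finType) (c : R) : \big[Rplus/0]_(i : I) c = INR #|I| * c.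
Proof. by rewrite sumR_const; congr (INR _ * _); apply: eq_card. Qed.

Lemma sumR_const_ord (n : nat) (c : R) : \big[Rplus/0]_(i < n) c = INR n * c.
Proof. by rewrite sumR_constT card_ord. Qed.

Lemma sumR_const_ord_lt (k r : nat) (c : R) : (r <= k)%N ->
  \big[Rplus/0]_(j : 'I_k | (j < r)%N) c = INR r * c.
Proof.
move=> le_rk; rewrite -(big_ord_widen _ (fun _ => c) le_rk) sumR_const.
by rewrite cardE size_enum_ord.
Qed.

Lemma card_ord_lt (k r : nat) : (r <= k)%N -> #|[pred j : 'I_k | (j < r)%N]| = r.
Proof.
move=> le_rk; rewrite -sum1_card.
by rewrite -(big_ord_widen _ (fun _ => 1%N) le_rk) sum1_card card_ord.
Qed.

Lemma INR_card (T : finType) (A : {set T}) :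
  INR #|A| = \big[Rplus/0]_(x : T) (if x \in A then 1 else 0).
Proof. by rewrite -big_mkcond sumR_const Rmult_1_r; congr INR; apply: eq_card. Qed.

Lemma INR_sum (I : finType) (P : pred I) (F : I -> nat) :
  INR (\sum_(i | P i) F i) = \big[Rplus/0]_(i | P i) INR (F i).
Proof. exact: (big_morph INR plus_INR). Qed.

Lemma exists_le_of_sum_le (I : finType) (P : pred I) (F : I -> R) (B : R) (i0 : I) :
  P i0 -> \big[Rplus/0]_(i | P i) F i <= \big[Rplus/0]_(i | P i) B ->
  exists2 i, P i & F i <= B.
Proof.
move=> Pi0 sum_le; case: (pickP (fun i => P i && Rle_dec (F i) B)) => [i /andP[Pi] | none].
  by case: Rle_dec => // FiB _; exists i.
exfalso; apply: Rlt_not_le sum_le; apply: sumR_lt Pi0 _ => i Pi.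
by have := none i; rewrite Pi /=; case: Rle_dec => // FiB _; apply: Rnot_le_lt.
Qed.

Lemma sumR_prod_ffun (I : finType) (m : nat) (f : I -> R) :
  \big[Rplus/0]_(s : {ffun 'I_m -> I}) \big[Rmult/1]_(t : 'I_m) f (s t)
  = (\big[Rplus/0]_(i : I) f i) ^ m.
Proof.
rewrite -(bigA_distr_bigA (fun (_ : 'I_m) i => f i)) /=.
by elim: m => [|m IH]; rewrite ?big_ord0 // big_ord_recr /= IH Rmult_comm.
Qed.

Lemma card_bigcup_le (I T : finType) (P : pred I) (A : I -> {set T}) :
  (#|\bigcup_(i | P i) A i| <= \sum_(i | P i) #|A i|)%N.
Proof.
elim/big_ind2: _ => [|m U n V mU nV|//]; first by rewrite cards0.
exact: leq_trans (leq_card_setU U V) (leq_add mU nV).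
Qed.

Lemma card_ffun_eval_in (I T : finType) (j : I) (B : {pred T}) :
  (#|[set f : {ffun I -> T} | f j \in B]| * #|T| = #|B| * #|{ffun I -> T}|)%N.
Proof.
pose F x : pred T := fun y => (x != j) || (y \in B).
have -> : #|[set f : {ffun I -> T} | f j \in B]| = #|(family F : simpl_pred _)|.
  apply: eq_card => f; rewrite inE; apply/idP/familyP => [fjB x | /(_ j)].
    by rewrite /F unfold_in; case: eqP => // ->.
  by rewrite /F unfold_in eqxx.
rewrite card_family card_dep_ffun !foldrE !big_map -enumT !big_enum /=.
rewrite (bigD1 j) // [in RHS](bigD1 j) //=.
rewrite (eq_bigr (fun _ => #|T|)) => [|x x_neq_j]; last first.
  by apply: eq_card => y; rewrite unfold_in x_neq_j.
have -> : #|F j| = #|B| by apply: eq_card => y; rewrite unfold_in eqxx.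
by rewrite [(#|T| * _)%N]mulnC mulnA.
Qed.

(** * Total variation between product distributions *)

(* [chi2 p q = 1 + chi^2(q || p)] when [q] is absolutely continuous w.r.t. [p]. *)
Definition chi2 (D : nat) (p q : 'I_D -> R) : R :=
  \big[Rplus/0]_(i : 'I_D) (q i * q i / p i).

(* AM-GM, with [(P - Q)^2 / P] expanded as [Q^2 / P - 2 Q + P] so that it factorises
   over product distributions. *)
Lemma Rabs_sub_le_chi2 (P Q lam : R) : 0 <= P -> (P = 0 -> Q = 0) -> 0 < lam ->
  Rabs (P - Q) <= (Q * Q / P - 2 * Q + P) / (2 * lam) + lam * P / 2.
Proof.
move=> P_ge0 PQ lam_gt0.
case: (Req_dec P 0) => [P0 | P_neq0].
  by rewrite (PQ P0) P0 Rminus_0_r Rabs_R0 /Rdiv Rinv_0; lra.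
set u := Rabs (P - Q).
have -> : (Q * Q / P - 2 * Q + P) / (2 * lam) = u ^ 2 / (2 * lam * P).
  by rewrite /u pow2_abs; field; lra.
have : 0 <= (u - lam * P) ^ 2 / (2 * lam * P).
  by apply: Rle_mult_inv_pos; [apply: pow2_ge_0 | nra].
have -> : (u - lam * P) ^ 2 / (2 * lam * P) = u ^ 2 / (2 * lam * P) + lam * P / 2 - u.
  by field; lra.
lra.
Qed.

Lemma tv_iid_le_chi2 (D m : nat) (p q : 'I_D -> R) (lam : R) :
  in_simplex p -> in_simplex q -> (forall i, p i = 0 -> q i = 0) -> 0 < lam ->
  tv_iid m p q <= / 2 * ((chi2 p q ^ m - 1) / (2 * lam) + lam / 2).
Proof.
move=> [p_ge0 p_sum] [q_ge0 q_sum] pq lam_gt0.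
rewrite /tv_iid; apply: Rmult_le_compat_l; first lra.
pose Pm (f : 'I_D -> R) (s : {ffun 'I_m -> 'I_D}) := \big[Rmult/1]_(t : 'I_m) f (s t).
set a := / (2 * lam).
have Pm_eq0 s : Pm p s = 0 -> Pm q s = 0.
  by case/prodR_eq0 => t /pq qt0; rewrite /Pm (bigD1 t) //= qt0 Rmult_0_l.
have pointwise s : Rabs (Pm p s - Pm q s) <=
    a * Pm (fun i => q i * q i / p i) s + (-2 * a) * Pm q s + (a + lam / 2) * Pm p s.
  have Pm_ge0 : 0 <= Pm p s by apply: prodR_ge0 => t; apply: p_ge0.
  apply: Rle_trans (Rabs_sub_le_chi2 Pm_ge0 (Pm_eq0 s) lam_gt0) (Req_le _ _ _).
  rewrite /Pm /Rdiv prodR_inv !big_split /= /a.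
  move: (\big[Rmult/1]_(t < m) q (s t)) (\big[Rmult/1]_(t < m) / p (s t))
        (\big[Rmult/1]_(t < m) p (s t)) => X Y Z.
  field; lra.
apply: Rle_trans (sumR_le (fun s _ => pointwise s)) _.
rewrite !big_split -!big_distrr /= /Pm (@sumR_prod_ffun _ m (fun i => q i * q i / p i)).
rewrite !sumR_prod_ffun p_sum q_sum !pow1 -/(chi2 p q).
by apply: Req_le; rewrite /a; field; lra.
Qed.

Lemma tv_iid_lt_of_chi2 (D m : nat) (p q : 'I_D -> R) (a eps : R) :
  in_simplex p -> in_simplex q -> (forall i, p i = 0 -> q i = 0) ->
  chi2 p q <= 1 + a -> 0 <= a -> 0 < eps ->
  INR m * a < ln (1 + 4 * eps ^ 2) -> tv_iid m p q < eps.
Proof.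
move=> p_distr q_distr pq chi2_le a_ge0 eps_gt0 m_small.
apply: Rle_lt_trans (tv_iid_le_chi2 m p_distr q_distr pq (_ : 0 < 2 * eps)) _; first lra.
have chi2_ge0 : 0 <= chi2 p q.
  apply: sumR_ge0 => i; apply: Rmult_le_pos; first nra.
  exact/Rinv_ge0/p_distr.1.
have chi2_pow_lt : chi2 p q ^ m < 1 + 4 * eps ^ 2.
  apply: Rle_lt_trans (pow_1plus_lt a_ge0 _ m_small); last nra.
  by apply: pow_incr; lra.
have -> : / 2 * ((chi2 p q ^ m - 1) / (2 * (2 * eps)) + 2 * eps / 2)
          = eps - (1 + 4 * eps ^ 2 - chi2 p q ^ m) / (8 * eps) by field; lra.
have : 0 < (1 + 4 * eps ^ 2 - chi2 p q ^ m) / (8 * eps) by apply: Rdiv_lt_0_compat; lra.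
lra.
Qed.

(** * Dropping one topic *)

Definition mxmulv (D k : nat) (M : 'I_D -> 'I_k -> R) (x : 'I_k -> R) (i : 'I_D) : R :=
  \big[Rplus/0]_(j : 'I_k) (M i j * x j).

Definition unif_prefix (r k : nat) (j : 'I_k) : R := if (j < r)%N then / INR r else 0.

Definition unif_prefix_but (r k : nat) (j0 j : 'I_k) : R :=
  if (j < r)%N && (j != j0) then / (INR r - 1) else 0.

Arguments unif_prefix r {k} j.
Arguments unif_prefix_but r {k} j0 j.

Section UniformPrefix.
Variables (k r : nat).
Hypothesis r_le_k : (r <= k)%N.

Lemma card_supp_le (x : 'I_k -> R) :
  (forall j : 'I_k, (r <= j)%N -> x j = 0) -> (#|supp x| <= r)%N.
Proof.
move=> x0; rewrite -(card_ord_lt r_le_k); apply/subset_leq_card/subsetP => j.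
rewrite /supp !inE ltnNge; case: Req_EM_T => // xj _.
by apply/negP => /x0.
Qed.

Lemma unif_prefix_simplex : (0 < r)%N -> in_simplex (unif_prefix r : 'I_k -> R).
Proof.
move=> r_gt0; have r_pos : 0 < INR r by apply/lt_0_INR/ltP.
split=> [j|].
  by rewrite /unif_prefix; case: ifP => _; [apply/Rlt_le/Rinv_0_lt_compat | lra].
by rewrite /unif_prefix -big_mkcond /= sumR_const_ord_lt //; field; lra.
Qed.

Lemma unif_prefix_sparse : r_sparse r (unif_prefix r : 'I_k -> R).
Proof.
split=> [|j]; first by apply: card_supp_le => j; rewrite /unif_prefix ltnNge => ->.
by rewrite /unif_prefix; case: ifP => _ //; lra.
Qed.

Variable j0 : 'I_k.
Hypotheses (r_gt1 : (1 < r)%N) (j0_lt_r : (j0 < r)%N).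

Lemma unif_prefix_but_simplex : in_simplex (unif_prefix_but r j0).
Proof.
have r2 := INR_ge2 r_gt1.
split=> [j|].
  by rewrite /unif_prefix_but; case: ifP => _; [apply/Rlt_le/Rinv_0_lt_compat | ]; lra.
rewrite /unif_prefix_but -big_mkcond /=.
have := sumR_const_ord_lt (/ (INR r - 1)) r_le_k; rewrite (bigD1 j0) //= => sum_eq.
by apply: (Rplus_eq_reg_l (/ (INR r - 1))); rewrite sum_eq; field; lra.
Qed.

Lemma unif_prefix_but_sparse : r_sparse r (unif_prefix_but r j0).
Proof.
have r2 := INR_ge2 r_gt1.
split=> [|j]; first by apply: card_supp_le => j; rewrite /unif_prefix_but ltnNge => ->.
by rewrite /unif_prefix_but; case: ifP => _ // _; apply: Rinv_le_contravar; lra.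
Qed.

Lemma supp_unif_prefix_but_neq : supp (unif_prefix r) <> supp (unif_prefix_but r j0).
Proof.
have r_pos : 0 < / INR r by apply: Rinv_0_lt_compat; have := INR_ge2 r_gt1; lra.
move/setP/(_ j0); rewrite !inE /unif_prefix /unif_prefix_but j0_lt_r eqxx andbF.
case: (Req_dec_T (/ INR r) 0) => [|_] /=; first lra.
by case: (Req_dec_T 0 0).
Qed.

End UniformPrefix.

Section DropOneColumn.
Variables (D k r : nat) (M : 'I_D -> 'I_k -> R) (delta : R).
Hypotheses (r_gt1 : (1 < r)%N) (r_le_k : (r <= k)%N).
Hypothesis M_ge0 : forall i j, 0 <= M i j.
Hypothesis M_col : forall j : 'I_k, (j < r)%N -> \big[Rplus/0]_(i : 'I_D) M i j = 1.

Lemma mxmulv_simplex (x : 'I_k -> R) :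
  in_simplex x -> (forall j : 'I_k, (r <= j)%N -> x j = 0) -> in_simplex (mxmulv M x).
Proof.
move=> [x_ge0 x_sum] x0; split=> [i|].
  by apply: sumR_ge0 => j; apply: Rmult_le_pos.
rewrite /mxmulv exchange_big /= -x_sum; apply: eq_bigr => j _.
rewrite -big_distrl /=; case: (ltnP j r) => [jr | rj]; first by rewrite M_col // Rmult_1_l.
by rewrite x0 // Rmult_0_r.
Qed.

Let row_mass i := \big[Rplus/0]_(j : 'I_k | (j < r)%N) M i j.
Local Notation p := (mxmulv M (unif_prefix r)).
Local Notation q j0 := (mxmulv M (unif_prefix_but r j0)).

Lemma sum_row_mass : \big[Rplus/0]_(i : 'I_D) row_mass i = INR r.
Proof.
rewrite /row_mass exchange_big /= -[INR r]Rmult_1_r -(sumR_const_ord_lt _ r_le_k).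
by apply: eq_bigr => j; apply: M_col.
Qed.

Lemma mxmulv_unif_prefixE (i : 'I_D) : p i = row_mass i / INR r.
Proof.
rewrite /mxmulv /row_mass /Rdiv big_distrl /= [RHS]big_mkcond /=.
by apply: eq_bigr => j _; rewrite /unif_prefix; case: ifP => _; lra.
Qed.

Lemma mxmulv_unif_prefix_butE (j0 : 'I_k) (i : 'I_D) :
  (j0 < r)%N -> q j0 i = (row_mass i - M i j0) / (INR r - 1).
Proof.
move=> j0r; rewrite /row_mass (bigD1 j0) //= Rplus_minus_l /mxmulv /Rdiv.
rewrite big_distrl /= [RHS]big_mkcond /=.
by apply: eq_bigr => j _; rewrite /unif_prefix_but; case: ifP => _; lra.
Qed.

Lemma mxmulv_unif_prefix_simplex : in_simplex p.
Proof.
apply: mxmulv_simplex; first exact: unif_prefix_simplex (ltnW r_gt1).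
by move=> j; rewrite /unif_prefix ltnNge => ->.
Qed.

Lemma mxmulv_unif_prefix_but_simplex (j0 : 'I_k) : (j0 < r)%N -> in_simplex (q j0).
Proof.
move=> j0r; apply: mxmulv_simplex; first exact: unif_prefix_but_simplex.
by move=> j; rewrite /unif_prefix_but ltnNge => ->.
Qed.

Lemma mxmulv_unif_prefix_but_eq0 (j0 : 'I_k) (i : 'I_D) :
  (j0 < r)%N -> p i = 0 -> q j0 i = 0.
Proof.
move=> j0r; have r2 := INR_ge2 r_gt1.
have := (mxmulv_unif_prefix_but_simplex j0r).1 i.
rewrite mxmulv_unif_prefixE mxmulv_unif_prefix_butE // => q_ge0.
case/Rmult_integral => [mass0 | inv0]; last first.
  by exfalso; apply: (Rinv_neq_0_compat (INR r)) => //; lra.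
have : 0 <= M i j0 / (INR r - 1) by apply: Rle_mult_inv_pos; [apply: M_ge0 | lra].
rewrite mass0 (_ : (0 - M i j0) / (INR r - 1) = - (M i j0 / (INR r - 1))) in q_ge0 *.
  by lra.
by field; lra.
Qed.

Hypothesis M_le : forall i (j : 'I_k), (j < r)%N -> M i j <= delta.

Let k_gt0 : (0 < k)%N := leq_trans (ltnW r_gt1) r_le_k.

(* With [s] the row mass, [q j0 i = (s - M i j0) / (r - 1)] and [p i = s / r]; expanding
   the square, only [sum_j M i j ^ 2 <= delta s] needs a bound. *)
Lemma sum_drop_sq_div_le (i : 'I_D) :
  \big[Rplus/0]_(j0 : 'I_k | (j0 < r)%N) (q j0 i * q j0 i / p i)
  <= INR r / (INR r - 1) ^ 2 * ((INR r - 2) * row_mass i + delta).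
Proof.
have r2 := INR_ge2 r_gt1.
have delta_ge0 : 0 <= delta.
  by have := M_le i (j := Ordinal k_gt0) (ltnW r_gt1); have := M_ge0 i (Ordinal k_gt0); lra.
have : 0 <= row_mass i by apply: sumR_ge0.
case=> [mass_gt0 | /esym mass0]; last first.
  rewrite big1 => [| j0 _]; last first.
    by rewrite mxmulv_unif_prefixE mass0 /Rdiv Rmult_0_l Rinv_0 Rmult_0_r.
  by rewrite mass0; apply: Rmult_le_pos; [apply: Rle_mult_inv_pos |]; nra.
have sq_le : \big[Rplus/0]_(j : 'I_k | (j < r)%N) (M i j * M i j) <= delta * row_mass i.
  rewrite /row_mass big_distrr /=; apply: sumR_le => j jr.
  by have := M_le i jr; have := M_ge0 i j; nra.
set c := INR r / ((INR r - 1) ^ 2 * row_mass i).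
have c_gt0 : 0 < c by apply: Rdiv_lt_0_compat; [lra | apply: Rmult_lt_0_compat; nra].
have term (j0 : 'I_k) : (j0 < r)%N -> q j0 i * q j0 i / p i
    = c * (row_mass i * row_mass i) + (- 2 * c * row_mass i) * M i j0
      + c * (M i j0 * M i j0).
  move=> j0r; rewrite mxmulv_unif_prefix_butE // mxmulv_unif_prefixE /c.
  by move: (M i j0) (row_mass i) mass_gt0 => a s s_gt0; field; lra.
rewrite (eq_bigr _ term) !big_split /= sumR_const_ord_lt // -!big_distrr /= -/(row_mass i).
change ((INR r - 1) * ((INR r - 1) * 1)) with ((INR r - 1) ^ 2).
move: (\big[Rplus/0]_(j : 'I_k | (j < r)%N) (M i j * M i j)) sq_le => T T_le.
have := Rmult_le_compat_l _ _ _ (Rlt_le _ _ c_gt0) T_le.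
have : INR r * (c * (row_mass i * row_mass i)) + - 2 * c * row_mass i * row_mass i
         + c * (delta * row_mass i)
       = INR r / (INR r - 1) ^ 2 * ((INR r - 2) * row_mass i + delta).
  by rewrite /c; move: (row_mass i) mass_gt0 => s s_gt0; field; lra.
lra.
Qed.

Lemma exists_drop_chi2_le :
  exists2 j0 : 'I_k, (j0 < r)%N & chi2 p (q j0) <= 1 + INR D * delta / (INR r - 1) ^ 2.
Proof.
have r2 := INR_ge2 r_gt1.
apply: (@exists_le_of_sum_le _ _ _ _ (Ordinal k_gt0)); first exact: ltnW r_gt1.
rewrite sumR_const_ord_lt // /chi2 exchange_big /=.
apply: Rle_trans (sumR_le (fun i _ => sum_drop_sq_div_le i)) _.
rewrite -big_distrr big_split -big_distrr /= sum_row_mass sumR_const_ord.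
change ((INR r - 1) * ((INR r - 1) * 1)) with ((INR r - 1) ^ 2).
have : INR r * (1 + INR D * delta / (INR r - 1) ^ 2)
       - INR r / (INR r - 1) ^ 2 * ((INR r - 2) * INR r + INR D * delta)
       = INR r / (INR r - 1) ^ 2 by field; lra.
have : 0 <= INR r / (INR r - 1) ^ 2 by apply: Rle_mult_inv_pos; nra.
lra.
Qed.

End DropOneColumn.

(** * Size of a uniform random subset *)

Section UniformSubsets.
Variables D k : nat.

Lemma card_subsets_gt0 : 0 < INR #|{set 'I_D}|.
Proof. by apply/lt_0_INR/ltP/card_gt0P; exists set0. Qed.

Lemma card_Omega_gt0 : 0 < INR #|Omega D k|.
Proof. by apply/lt_0_INR/ltP/card_gt0P; exists [ffun => set0]. Qed.

Lemma prob_ge0 (E : {set Omega D k}) : 0 <= prob E.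
Proof. by apply: Rle_mult_inv_pos; [apply: pos_INR | rewrite cardsT; apply: card_Omega_gt0]. Qed.

Lemma prob_setC (E : {set Omega D k}) : prob (~: E) = 1 - prob E.
Proof.
have := card_Omega_gt0; rewrite /prob cardsT -(cardsC E) plus_INR => pos.
by field; lra.
Qed.

Lemma prob_le1 (E : {set Omega D k}) : prob E <= 1.
Proof. by have := prob_ge0 (~: E); rewrite prob_setC; lra. Qed.

Lemma prob_bigcup_le (I : finType) (P : pred I) (E : I -> {set Omega D k}) :
  prob (\bigcup_(i | P i) E i) <= \big[Rplus/0]_(i | P i) prob (E i).
Proof.
rewrite /prob cardsT /Rdiv -big_distrl /= -INR_sum.
apply/Rmult_le_compat_r/le_INR/leP/card_bigcup_le.
exact/Rlt_le/Rinv_0_lt_compat/card_Omega_gt0.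
Qed.

Lemma prob_eval_in (j : 'I_k) (B : {pred {set 'I_D}}) :
  prob [set S : Omega D k | S j \in B] = INR #|B| / INR #|{set 'I_D}|.
Proof.
have card_eq : (#|[set S : Omega D k | S j \in B]| * #|{set 'I_D}|
                = #|B| * #|Omega D k|)%N by exact: card_ffun_eval_in.
move/(f_equal INR): card_eq; rewrite !mult_INR => card_eq.
rewrite /prob cardsT; apply: Rdiv_eq_cross card_Omega_gt0 card_subsets_gt0 _.
by rewrite card_eq Rmult_comm.
Qed.

Definition sign_in (A : {set 'I_D}) (i : 'I_D) : R := if i \in A then 1 else -1.

Definition toggle (i : 'I_D) (A : {set 'I_D}) : {set 'I_D} :=
  if i \in A then A :\ i else i |: A.

Lemma toggleK (i : 'I_D) : involutive (toggle i).
Proof.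
move=> A; rewrite {2}/toggle; case: (boolP (i \in A)) => iA.
  by rewrite /toggle setD11 setD1K.
by rewrite /toggle setU11 setU1K.
Qed.

Lemma sign_in_toggle (i i' : 'I_D) (A : {set 'I_D}) :
  sign_in (toggle i A) i' = if i' == i then - sign_in A i' else sign_in A i'.
Proof.
rewrite /sign_in /toggle; case: eqP => [-> | /eqP ne]; case: (boolP (i \in A)) => iA.
- by rewrite setD11; lra.
- by rewrite setU11; lra.
- by rewrite in_setD1 ne.
- by rewrite in_setU1 (negbTE ne).
Qed.

Lemma sum_sign_in (A : {set 'I_D}) :
  \big[Rplus/0]_(i : 'I_D) sign_in A i = 2 * INR #|A| - INR D.
Proof.
rewrite (eq_bigr (fun i => 2 * (if i \in A then 1 else 0) + -1)); last first.
  by move=> i _; rewrite /sign_in; case: ifP => _; lra.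
rewrite big_split /= -big_distrr /= -INR_card sumR_const_ord.
by rewrite (_ : INR D * -1 = - INR D) //; ring.
Qed.

Lemma sum_sign_in_mul (i i' : 'I_D) : i' != i ->
  \big[Rplus/0]_(A : {set 'I_D}) (sign_in A i * sign_in A i') = 0.
Proof.
move=> ne.
have : \big[Rplus/0]_(A : {set 'I_D}) (sign_in A i * sign_in A i')
       = \big[Rplus/0]_(A : {set 'I_D}) (-1 * (sign_in A i * sign_in A i')).
  rewrite (reindex_inj (can_inj (toggleK i))) /=; apply: eq_bigr => A _.
  by rewrite !sign_in_toggle eqxx (negbTE ne); lra.
by rewrite -big_distrr /=; lra.
Qed.

Lemma sum_sq_card_dev :
  \big[Rplus/0]_(A : {set 'I_D}) ((2 * INR #|A| - INR D) * (2 * INR #|A| - INR D))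
  = INR D * INR #|{set 'I_D}|.
Proof.
have expand (A : {set 'I_D}) : (2 * INR #|A| - INR D) * (2 * INR #|A| - INR D)
    = \big[Rplus/0]_(i : 'I_D) \big[Rplus/0]_(i' : 'I_D) (sign_in A i * sign_in A i').
  by rewrite -sum_sign_in big_distrl; apply: eq_bigr => i _; rewrite big_distrr.
rewrite (eq_bigr _ (fun A _ => expand A)) exchange_big /= -sumR_const_ord.
apply: eq_bigr => i _; rewrite exchange_big /= (bigD1 i) //= [X in _ + X]big1 => [|i' ne].
  2: exact: sum_sign_in_mul.
rewrite Rplus_0_r -[INR _]Rmult_1_r -sumR_constT; apply: eq_bigr => A _.
by rewrite /sign_in; case: ifP => _; lra.
Qed.

Definition small_subsets : {set {set 'I_D}} := [set A : {set 'I_D} | (3 * #|A| < D)%N].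

(* Chebyshev: a small subset deviates from [D/2] by more than [D/6]. *)
Lemma card_small_subsets_le : INR #|small_subsets| * INR D <= 9 * INR #|{set 'I_D}|.
Proof.
have N_ge0 := pos_INR #|{set 'I_D}|.
case: (posnP D) => [D0 | D_gt0].
  by rewrite (_ : INR D = 0) ?D0 // Rmult_0_r; lra.
have D_pos : 0 < INR D by apply/lt_0_INR/ltP.
have dev_ge (a : R) : 0 <= a -> INR 3 * a + 1 <= INR D ->
    INR D * INR D / 9 <= (2 * a - INR D) * (2 * a - INR D).
  move=> a_ge0 /= small.
  have : INR D / 3 <= INR D - 2 * a by lra.
  have : 0 <= INR D / 3 by lra.
  nra.
have chebyshev : INR #|small_subsets| * (INR D * INR D / 9) <= INR D * INR #|{set 'I_D}|.
  rewrite -sum_sq_card_dev (INR_card small_subsets) big_distrl /=; apply: sumR_le => A _.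
  case: ifP => [|_]; last by rewrite Rmult_0_l; apply: Rle_0_sqr.
  rewrite inE Rmult_1_l => /leP/le_INR; rewrite S_INR mult_INR.
  by apply: dev_ge; apply: pos_INR.
apply: (Rmult_le_reg_l (INR D / 9)); first lra.
have -> : INR D / 9 * (INR #|small_subsets| * INR D)
          = INR #|small_subsets| * (INR D * INR D / 9) by field.
by have -> : INR D / 9 * (9 * INR #|{set 'I_D}|) = INR D * INR #|{set 'I_D}| by field.
Qed.

End UniformSubsets.

(** * The random instance *)

Definition large_cols (D k r : nat) (S : Omega D k) : bool :=
  [forall j : 'I_k, (j < r)%N ==> (D <= 3 * #|S j|)%N].

Lemma prob_large_cols (D k r : nat) : (r <= k)%N -> (0 < D)%N ->
  1 - 9 * INR r / INR D <= prob [set S : Omega D k | large_cols r S].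
Proof.
move=> le_rk D_gt0; have D_pos : 0 < INR D by apply/lt_0_INR/ltP.
have small_le : INR #|small_subsets D| / INR #|{set 'I_D}| <= 9 / INR D.
  exact: Rdiv_le_cross (card_subsets_gt0 D) D_pos (card_small_subsets_le D).
have bad_eq : ~: [set S : Omega D k | large_cols r S]
    = \bigcup_(j : 'I_k | (j < r)%N) [set S : Omega D k | S j \in small_subsets D].
  apply/setP => S; rewrite !inE; apply/forallPn/bigcupP => [[j] | [j jr]].
    by rewrite negb_imply -ltnNge => /andP[jr small]; exists j => //; rewrite !inE.
  by rewrite !inE => small; exists j; rewrite negb_imply jr -ltnNge.
rewrite -[X in prob X]setCK prob_setC bad_eq.
have := prob_bigcup_le (fun j : 'I_k => (j < r)%N)
          (fun j => [set S : Omega D k | S j \in small_subsets D]).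
rewrite (eq_bigr _ (fun j _ => prob_eval_in j (small_subsets D))) sumR_const_ord_lt //.
have : INR r * (INR #|small_subsets D| / INR #|{set 'I_D}|) <= INR r * (9 / INR D).
  by apply: Rmult_le_compat_l; [apply: pos_INR | ].
have -> : 9 * INR r / INR D = INR r * (9 / INR D) by field; lra.
move=> ratio_le union_le.
exact: Rplus_le_compat_l (Ropp_le_contravar _ _ (Rle_trans _ _ _ union_le ratio_le)).
Qed.

(* On [large_cols r S] the [None] branch is never taken (see [drop_index_some]). *)
Definition drop_index (D k r : nat) (S : Omega D k) : option 'I_k :=
  [pick j0 : 'I_k | (j0 < r)%N && Rle_dec
     (chi2 (Amul S (unif_prefix r)) (Amul S (unif_prefix_but r j0))) (1 + 3 / (INR r - 1) ^ 2)].

Definition drop_vector (D k r : nat) (S : Omega D k) : 'I_k -> R :=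
  if drop_index r S is Some j0 then unif_prefix_but r j0 else unif_prefix r.

Section LargeColumns.
Variables (D k r : nat) (S : Omega D k).
Hypotheses (r_gt1 : (1 < r)%N) (r_le_k : (r <= k)%N) (D_gt0 : (0 < D)%N).
Hypothesis large : large_cols r S.

Lemma Amat_ge0 i j : 0 <= Amat S i j.
Proof. by rewrite /Amat; case: ifP => _; [apply/Rinv_ge0/pos_INR | lra]. Qed.

Lemma large_col_card (j : 'I_k) : (j < r)%N -> INR D <= 3 * INR #|S j|.
Proof.
move=> jr; have /le_INR := elimT leP (implyP (forallP large j) jr).
by rewrite mult_INR /= => le; lra.
Qed.

Lemma large_col_card_gt0 (j : 'I_k) : (j < r)%N -> 0 < INR #|S j|.
Proof.
move/large_col_card => le; have : 0 < INR D by apply/lt_0_INR/ltP.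
lra.
Qed.

Lemma Amat_col_sum (j : 'I_k) : (j < r)%N -> \big[Rplus/0]_(i : 'I_D) Amat S i j = 1.
Proof.
move/large_col_card_gt0 => Sj_pos; rewrite /Amat -big_mkcond sumR_const.
by rewrite (_ : #|_| = #|S j|); [field; lra | apply: eq_card].
Qed.

Lemma Amat_le i (j : 'I_k) : (j < r)%N -> Amat S i j <= 3 / INR D.
Proof.
move=> jr; have D_pos : 0 < INR D by apply/lt_0_INR/ltP.
rewrite /Amat; case: ifP => _; last by apply/Rlt_le/Rdiv_lt_0_compat; lra.
rewrite -(Rmult_1_l (/ _)); apply: Rdiv_le_cross (large_col_card_gt0 jr) D_pos _.
by have := large_col_card jr; lra.
Qed.

Lemma drop_index_some : exists2 j0 : 'I_k, drop_index r S = Some j0 &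
  (j0 < r)%N /\ chi2 (Amul S (unif_prefix r)) (Amul S (unif_prefix_but r j0))
                <= 1 + 3 / (INR r - 1) ^ 2.
Proof.
have D_pos : 0 < INR D by apply/lt_0_INR/ltP.
have [j1 j1r] := exists_drop_chi2_le r_gt1 r_le_k Amat_ge0 Amat_col_sum Amat_le.
rewrite (_ : INR D * (3 / INR D) = 3); last by field; lra.
move=> chi2_le; rewrite /drop_index; case: pickP => [j0 /andP[j0r] | none].
  by case: Rle_dec => // le _; exists j0.
by have := none j1; rewrite j1r; case: Rle_dec.
Qed.

Lemma drop_vector_spec :
  [/\ in_simplex (unif_prefix r : 'I_k -> R), in_simplex (drop_vector r S),
      r_sparse r (unif_prefix r : 'I_k -> R), r_sparse r (drop_vector r S)
    & supp (unif_prefix r) <> supp (drop_vector r S)].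
Proof.
have [j0 drop_j0 [j0r _]] := drop_index_some; rewrite /drop_vector drop_j0.
split; first exact: unif_prefix_simplex (ltnW r_gt1).
- exact: unif_prefix_but_simplex.
- exact: unif_prefix_sparse.
- exact: unif_prefix_but_sparse.
- exact: supp_unif_prefix_but_neq.
Qed.

Lemma tv_iid_drop_lt (m : nat) (eps : R) : 0 < eps ->
  INR m / INR r ^ 2 < ln (1 + 4 * eps ^ 2) / 12 ->
  tv_iid m (Amul S (unif_prefix r)) (Amul S (drop_vector r S)) < eps.
Proof.
move=> eps_gt0 m_small; have r2 := INR_ge2 r_gt1.
have [j0 drop_j0 [j0r chi2_le]] := drop_index_some; rewrite /drop_vector drop_j0.
apply: (tv_iid_lt_of_chi2 (a := 12 / INR r ^ 2)) => //.
- exact (mxmulv_unif_prefix_simplex r_gt1 r_le_k Amat_ge0 Amat_col_sum).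
- exact (mxmulv_unif_prefix_but_simplex r_gt1 r_le_k Amat_ge0 Amat_col_sum j0r).
- move=> i; exact (mxmulv_unif_prefix_but_eq0 r_gt1 r_le_k Amat_ge0 Amat_col_sum j0r).
- by apply: Rle_trans chi2_le _; apply/Rplus_le_compat_l/Rdiv_le_cross; nra.
- by apply: Rle_mult_inv_pos; [lra | nra].
- have -> : INR m * (12 / INR r ^ 2) = 12 * (INR m / INR r ^ 2) by field; lra.
  lra.
Qed.

End LargeColumns.

Lemma eventually_large_params (r D : nat -> nat) :
  cv_infty (fun n => INR (r n)) -> cv_infty (fun n => INR (D n) / INR (r n) ^ 2) ->
  forall eps, 0 < eps -> exists N, forall n, (N <= n)%coq_nat ->
    [/\ (1 < r n)%N, (0 < D n)%N & 9 * INR (r n) / INR (D n) < eps].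
Proof.
move=> hr hD eps eps_gt0.
have [N1 r_big] := hr (2 + 9 / eps); have [N2 D_big] := hD 1.
exists (Nat.max N1 N2) => n nN.
have {}r_big := r_big n (Nat.le_trans _ _ _ (Nat.le_max_l N1 N2) nN).
have {}D_big := D_big n (Nat.le_trans _ _ _ (Nat.le_max_r N1 N2) nN).
have nine_div : 0 < 9 / eps by apply: Rdiv_lt_0_compat; lra.
have r_gt1 : (1 < r n)%N by apply/leP/INR_lt => /=; lra.
have r_pos : 0 < INR (r n) ^ 2 by apply: pow_lt; lra.
have D_gt_r2 : INR (r n) ^ 2 < INR (D n).
  have := Rmult_lt_compat_r _ _ _ r_pos D_big.
  by rewrite Rmult_1_l /Rdiv Rmult_assoc Rinv_l ?Rmult_1_r //; lra.
have D_gt0 : (0 < D n)%N by apply/leP/INR_lt => /=; lra.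
split => //.
have eps_r : 9 < eps * INR (r n).
  have : 9 / eps * eps = 9 by field; lra.
  have := Rmult_lt_0_compat _ _ eps_gt0 (_ : 0 < INR (r n) - (2 + 9 / eps)); lra.
have D_pos : 0 < INR (D n) by lra.
apply: (Rmult_lt_reg_r (INR (D n))) => //.
have -> : 9 * INR (r n) / INR (D n) * INR (D n) = 9 * INR (r n) by field; lra.
have : 0 < INR (r n) by apply/lt_0_INR/ltP/ltnW.
nra.
Qed.

Theorem lemma6p3 (r k D : nat -> nat)
  (hrk : forall n, (r n <= k n)%N)
  (hr : cv_infty (fun n => INR (r n)))
  (hD : cv_infty (fun n => INR (D n) / (INR (r n) ^ 2)))
  (hk : Un_cv (fun n => ln (INR (k n)) / INR (D n)) 0) :
  exists (G : forall n, {set Omega (D n) (k n)})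
         (x xm : forall n, Omega (D n) (k n) -> 'I_(k n) -> R),
    Un_cv (fun n => prob (G n)) 1 /\
    (forall n (S : Omega (D n) (k n)), S \in G n ->
       in_simplex (x n S) /\ in_simplex (xm n S) /\
       r_sparse (r n) (x n S) /\ r_sparse (r n) (xm n S) /\
       supp (x n S) <> supp (xm n S)) /\
    (forall m : nat -> nat,
       Un_cv (fun n => INR (m n) / (INR (r n) ^ 2)) 0 ->
       forall eps, eps > 0 -> exists N, forall n, (N <= n)%N ->
         forall S : Omega (D n) (k n), S \in G n ->
           tv_iid (m n) (Amul S (x n S)) (Amul S (xm n S)) < eps).
Proof.
pose G n : {set Omega (D n) (k n)} :=
  if (1 < r n)%N && (0 < D n)%N then [set S | large_cols (r n) S] else set0.
have G_large n S : S \in G n -> [/\ (1 < r n)%N, (0 < D n)%N & large_cols (r n) S].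
  by rewrite /G; case: ifP => [/andP[r_gt1 D_gt0] | _]; rewrite inE.
exists G, (fun n _ => unif_prefix (r n)), (fun n S => drop_vector (r n) S).
split; [|split].
- move=> eps eps_gt0; have [N large_n] := eventually_large_params hr hD eps_gt0.
  exists N => n nN; have [r_gt1 D_gt0 ratio_lt] := large_n n nN.
  have := prob_le1 (G n); have := prob_large_cols (k := k n) (hrk n) D_gt0.
  rewrite /G r_gt1 D_gt0 /R_dist /=; set P := prob _ => ge le1.
  by rewrite Rabs_left1; lra.
- move=> n S /G_large[r_gt1 D_gt0 large].
  by case: (drop_vector_spec r_gt1 (hrk n) D_gt0 large).
- move=> m hm eps eps_gt0.
  have ln_pos : 0 < ln (1 + 4 * eps ^ 2) / 12.
    by apply: Rdiv_lt_0_compat; [rewrite -ln_1; apply: ln_increasing; nra | lra].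
  have [N m_small] := hm _ ln_pos.
  exists N => n /leP nN S /G_large[r_gt1 D_gt0 large].
  apply: tv_iid_drop_lt => //; apply: Rle_lt_trans (Rle_abs _) _.
  by have := m_small n nN; rewrite /R_dist Rminus_0_r.
Qed.
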